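(* Let $\beta\in(0,\infty)^d$ and $\gamma_2=\min_i\big(-\beta(i)\log\rho_i\big)$. For $\epsilon,\delta>0$ define $W_l(x)=2\gamma_2-\alpha_l\epsilon+\langle q_l,x\rangle$ for $l=1,\dots,L$ and $W^{\epsilon,\delta}(x)=-\delta\log\sum_{l=1}^L\exp(-W_l(x)/\delta)$. Then $W^{\epsilon,\delta}(x)\le 0$ for all $x\in\mathcal{S}_2=\{x\in\mathbb{R}^d_+: x(i)=\beta(i)\text{ for some }i\text{ and }x(j)\le\beta(j)\text{ for all }j\}$.
   Context: Jackson network with a tree topology on nodes $\{1,\dots,d\}$, root node $1$; $i\to j$ means node $j$ is a child of node $i$. Customers arrive from outside only at node $1$, with rate $\lambda>0$. For $i\to j$, $\mu_{i,j}>0$ is the rate at which node $i$ serves customers and sends them to node $j$; $\mu_{i,0}\ge 0$ is the rate at which node $i$ serves customers who then leave the system. Let $\mu_i=\sum_{k:i\to k}\mu_{i,k}+\mu_{i,0}>0$. Arrival rates: $\Lambda_1=\lambda$ and $\Lambda_j=\Lambda_i\mu_{i,j}/\mu_i$ if $i\to j$. Utilities $\rho_i=\Lambda_i/\mu_i$, assumed to satisfy $\max_i\rho_i<1$; also $\lambda+\sum_i\mu_i=1$. Let $\mu'_{i,0}=\Lambda_i\mu_{i,0}/\mu_i$. Bitmaps $b\in\{0,1\}^d$ ($b(i)=1$: node $i$ nonempty, $b(i)=0$: empty). Effective rates: $M_i(b)=\mu_i$ if $b(i)=1$, $M_i(b)=\min(\mu_i,\sum_{k:i\to k}M_k(b)+\mu'_{i,0})$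 if $b(i)=0$; effective gradient of $b$: $q(i)=2\log(\Lambda_i/M_i(b))$. Simple rates: $m_i(b)=\mu_i$ if $b(i)=1$, $m_i(b)=\sum_{k:i\to k}m_k(b)+\mu'_{i,0}$ if $b(i)=0$; simple gradient of $b$: $q(i)=2\log(\Lambda_i/m_i(b))$. Let $q_1,\dots,q_L$ be the distinct effective gradients over all bitmaps. Each $q_l$ is the simple gradient of some bitmap $\bar b_l$; define $\alpha_l=1+\#\{i:\bar b_l(i)=0\}$. *)

From Stdlib Require Import Reals List Arith.
Open Scope R_scope.

(* Nodes are 0,...,d-1 (node k here is node k+1 of the paper); the root is 0.
   The tree is given by a parent map [par]: for j <> 0, i -> j iff par j = i. *)

Definition rsum {A : Type} (l : list A) (f : A -> R) : R :=
  fold_right (fun a acc => f a + acc) 0 l.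

Fixpoint Rmin_list (l : list R) : R :=
  match l with
  | nil => 0
  | x :: nil => x
  | x :: t => Rmin x (Rmin_list t)
  end.

Section Network.
Context (d : nat) (par : nat -> nat) (lam : R)
        (mu : nat -> nat -> R)
        (mu0 : nat -> R).        (* mu0 i = mu_{i,0} *)

Definition children (i : nat) : list nat :=
  filter (fun j => andb (negb (Nat.eqb j 0)) (Nat.eqb (par j) i)) (seq 0 d).

Definition mutot (i : nat) : R := rsum (children i) (fun k => mu i k) + mu0 i.

(* Lambda_1 = lambda, Lambda_j = Lambda_i mu_{i,j}/mu_i for i -> j
   (computed along the path to the root; fuel d suffices). *)
Fixpoint LamF (n : nat) (j : nat) : R :=
  match n with
  | O => lam
  | S n' => if Nat.eqb j 0 then lam
            else LamF n' (par j) * mu (par j) j / mutot (par j)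
  end.
Definition Lambda (j : nat) : R := LamF d j.

Definition rho (i : nat) : R := Lambda i / mutot i.

Definition mu0' (i : nat) : R := Lambda i * mu0 i / mutot i.

(* Effective rates, computed from the leaves up (fuel d >= height + 1). *)
Fixpoint MF (n : nat) (b : nat -> bool) (i : nat) : R :=
  match n with
  | O => mutot i
  | S n' => if b i then mutot i
            else Rmin (mutot i) (rsum (children i) (fun k => MF n' b k) + mu0' i)
  end.
Definition Meff (b : nat -> bool) (i : nat) : R := MF d b i.

Fixpoint mF (n : nat) (b : nat -> bool) (i : nat) : R :=
  match n with
  | O => mutot i
  | S n' => if b i then mutot i
            else rsum (children i) (fun k => mF n' b k) + mu0' i
  end.
Definition msimple (b : nat -> bool) (i : nat) : R := mF d b i.

Definition eff_gradient (b : nat -> bool) : list R :=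
  map (fun i => 2 * ln (Lambda i / Meff b i)) (seq 0 d).
Definition simple_gradient (b : nat -> bool) : list R :=
  map (fun i => 2 * ln (Lambda i / msimple b i)) (seq 0 d).

Definition alpha (b : nat -> bool) : R :=
  1 + INR (length (filter (fun i => negb (b i)) (seq 0 d))).

Definition inner (q : list R) (x : nat -> R) : R :=
  rsum (seq 0 d) (fun i => nth i q 0 * x i).

Definition gamma2 (beta : nat -> R) : R :=
  Rmin_list (map (fun i => - beta i * ln (rho i)) (seq 0 d)).

Definition S2 (beta : nat -> R) (x : nat -> R) : Prop :=
  (forall i, (i < d)%nat -> 0 <= x i /\ x i <= beta i) /\
  (exists i, (i < d)%nat /\ x i = beta i).

Definition W_l (beta : nat -> R) (eps : R) (qs : list (list R))
    (bbar : list (nat -> bool)) (l : nat) (x : nat -> R) : R :=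
  2 * gamma2 beta - alpha (nth l bbar (fun _ => true)) * eps
  + inner (nth l qs nil) x.

Definition W_soft (beta : nat -> R) (eps delta : R) (qs : list (list R))
    (bbar : list (nat -> bool)) (x : nat -> R) : R :=
  - delta * ln (rsum (seq 0 (length qs))
                  (fun l => exp (- W_l beta eps qs bbar l x / delta))).

End Network.

From Stdlib Require Import Reals List Arith Lra Lia.
Open Scope R_scope.

(* The bound holds because a single smooth-minimum term is already negative
   on S_2.  For the bitmap b = 1 in which every node is busy, the effective
   rate of node i is its full service rate mu_i, so the effective gradient is
   q(i) = 2 log rho_i <= 0.  If x lies in S_2 with x(i0) = beta(i0), then
     <q, x> <= 2 log(rho_i0) beta(i0) <= -2 gamma_2,
   since every summand is nonpositive and gamma_2 is a minimum over nodes.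
   As alpha_l >= 1 and eps > 0, the corresponding affine function satisfies
   W_l(x) <= -alpha_l eps < 0.  Finally the soft minimum
   -delta log sum_l exp(-W_l/delta) never exceeds any single W_l. *)

Lemma rsum_nonneg {A : Type} (l : list A) (f : A -> R) :
  (forall y, In y l -> 0 <= f y) -> 0 <= rsum l f.
Proof.
  induction l as [|h t IH]; simpl; intros Hpos; [lra|].
  assert (0 <= f h) by (apply Hpos; auto).
  assert (0 <= rsum t f) by (apply IH; intros y Hy; apply Hpos; auto).
  lra.
Qed.

Lemma rsum_ge_term {A : Type} (l : list A) (f : A -> R) (a : A) :
  (forall y, In y l -> 0 <= f y) -> In a l -> f a <= rsum l f.
Proof.
  induction l as [|h t IH]; simpl; intros Hpos Ha; [contradiction|].
  assert (Hh : 0 <= f h) by (apply Hpos; auto).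
  assert (Ht : forall y, In y t -> 0 <= f y) by (intros y Hy; apply Hpos; auto).
  destruct Ha as [<-|Ha].
  - pose proof (rsum_nonneg t f Ht). lra.
  - pose proof (IH Ht Ha). lra.
Qed.

Lemma rsum_le_term {A : Type} (l : list A) (f : A -> R) (a : A) :
  (forall y, In y l -> f y <= 0) -> In a l -> rsum l f <= f a.
Proof.
  intros Hneg Ha.
  assert (Hopp : rsum l (fun y => - f y) = - rsum l f).
  { clear Hneg Ha. induction l as [|h t IH]; simpl; [lra|]. rewrite IH. lra. }
  assert (- f a <= rsum l (fun y => - f y)).
  { apply (rsum_ge_term l (fun y => - f y) a); auto.
    intros y Hy. specialize (Hneg y Hy). lra. }
  lra.
Qed.

Lemma ln_le_mono (x y : R) : 0 < x -> x <= y -> ln x <= ln y.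
Proof.
  intros Hx [Hxy|<-]; [left; apply ln_increasing|]; lra.
Qed.

(* Stdlib's [ln] is 0 on nonpositive reals, so [ln r <= 0] for every r < 1. *)
Lemma ln_nonpos (r : R) : r < 1 -> ln r <= 0.
Proof.
  intros Hr. destruct (Rlt_dec 0 r) as [Hpos|Hnpos].
  - rewrite <- ln_1. left. apply ln_increasing; lra.
  - unfold ln. destruct (Rlt_dec 0 r); [contradiction|lra].
Qed.

Lemma Rmin_list_le (l : list R) (a : R) : In a l -> Rmin_list l <= a.
Proof.
  induction l as [|h t IH]; simpl; [contradiction|].
  intros [<-|Ha].
  - destruct t; [lra|]. apply Rmin_l.
  - destruct t; [contradiction|]. eapply Rle_trans; [apply Rmin_r|]. auto.
Qed.

Lemma nth_map_seq (f : nat -> R) (n i : nat) (dflt : R) :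
  (i < n)%nat -> nth i (map f (seq 0 n)) dflt = f i.
Proof.
  intros Hi. rewrite nth_indep with (d' := f 0%nat) by (rewrite length_map, length_seq; lia).
  rewrite map_nth, seq_nth by lia. reflexivity.
Qed.

Lemma softmin_le_term {A : Type} (l : list A) (f : A -> R) (delta : R) (a : A) :
  0 < delta -> In a l ->
  - delta * ln (rsum l (fun y => exp (- f y / delta))) <= f a.
Proof.
  intros Hdelta Ha.
  assert (Hterm : exp (- f a / delta) <= rsum l (fun y => exp (- f y / delta))).
  { apply (rsum_ge_term l (fun y => exp (- f y / delta))); auto.
    intros y _. left. apply exp_pos. }
  assert (Hln : - f a / delta <= ln (rsum l (fun y => exp (- f y / delta)))).
  { rewrite <- (ln_exp (- f a / delta)). apply ln_le_mono; auto. apply exp_pos. }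
  apply Rmult_le_compat_l with (r := delta) in Hln; [|lra].
  replace (delta * (- f a / delta)) with (- f a) in Hln by (field; lra).
  lra.
Qed.

Lemma alpha_ge_1 (d : nat) (b : nat -> bool) : 1 <= alpha d b.
Proof.
  unfold alpha. pose proof (pos_INR (length (filter (fun i => negb (b i)) (seq 0 d)))).
  lra.
Qed.

Section Network.
Variables (d : nat) (par : nat -> nat) (lam : R) (mu : nat -> nat -> R) (mu0 : nat -> R).

Let all_busy : nat -> bool := fun _ => true.

Lemma MF_all_busy (n i : nat) : MF d par lam mu mu0 n all_busy i = mutot d par mu mu0 i.
Proof. destruct n; reflexivity. Qed.

Lemma eff_gradient_all_busy (i : nat) : (i < d)%nat ->
  nth i (eff_gradient d par lam mu mu0 all_busy) 0 = 2 * ln (rho d par lam mu mu0 i).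
Proof.
  intros Hi. unfold eff_gradient. rewrite nth_map_seq by exact Hi.
  unfold Meff. rewrite MF_all_busy. reflexivity.
Qed.

Lemma inner_all_busy_on_S2 (beta x : nat -> R) :
  (forall i, (i < d)%nat -> rho d par lam mu mu0 i < 1) ->
  S2 d beta x ->
  inner d (eff_gradient d par lam mu mu0 all_busy) x
    <= - 2 * gamma2 d par lam mu mu0 beta.
Proof.
  intros Hrho [Hbox [i0 [Hi0 Hxi0]]].
  unfold inner.
  assert (Hterm : forall i, In i (seq 0 d) ->
    nth i (eff_gradient d par lam mu mu0 all_busy) 0 * x i
      = 2 * ln (rho d par lam mu mu0 i) * x i).
  { intros i Hi. apply in_seq in Hi. rewrite eff_gradient_all_busy by lia. reflexivity. }
  assert (Hgamma : gamma2 d par lam mu mu0 beta <= - beta i0 * ln (rho d par lam mu mu0 i0)).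
  { apply Rmin_list_le, in_map_iff. exists i0. split; auto. apply in_seq; lia. }
  eapply Rle_trans.
  - apply (rsum_le_term _ _ i0); [|apply in_seq; lia].
    intros i Hi. rewrite Hterm by exact Hi. apply in_seq in Hi.
    destruct (Hbox i ltac:(lia)) as [Hxi _].
    pose proof (ln_nonpos _ (Hrho i ltac:(lia))). nra.
  - rewrite Hterm, Hxi0 by (apply in_seq; lia). lra.
Qed.

End Network.

Theorem mainTheorem5
  (d : nat) (par : nat -> nat) (lam : R) (mu : nat -> nat -> R) (mu0 : nat -> R)
  (Hd : (1 <= d)%nat)
  (* tree rooted at 0: every node's parent chain reaches the root *)
  (Htree : forall j, (0 < j < d)%nat ->
             (par j < d)%nat /\ exists k, Nat.iter k par j = 0%nat)
  (Hlam : 0 < lam)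
  (Hmu : forall i j, (i < d)%nat -> In j (children d par i) -> 0 < mu i j)
  (Hmu0 : forall i, (i < d)%nat -> 0 <= mu0 i)
  (Hmutot : forall i, (i < d)%nat -> 0 < mutot d par mu mu0 i)
  (Hrho : forall i, (i < d)%nat -> rho d par lam mu mu0 i < 1)
  (Hnorm : lam + rsum (seq 0 d) (mutot d par mu mu0) = 1)
  (beta : nat -> R) (Hbeta : forall i, (i < d)%nat -> 0 < beta i)
  (eps delta : R) (Heps : 0 < eps) (Hdelta : 0 < delta)
  (* qs = [q_1; ...; q_L], the distinct effective gradients over all bitmaps *)
  (qs : list (list R)) (Hqs_nodup : NoDup qs)
  (Hqs : forall q, In q qs <-> exists b : nat -> bool,
           q = eff_gradient d par lam mu mu0 b)
  (* bbar_l: a bitmap whose simple gradient is q_l *)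
  (bbar : list (nat -> bool)) (Hlen : length bbar = length qs)
  (Hbbar : forall l, (l < length qs)%nat ->
             simple_gradient d par lam mu mu0 (nth l bbar (fun _ => true))
             = nth l qs nil)
  (x : nat -> R) (Hx : S2 d beta x) :
  W_soft d par lam mu mu0 beta eps delta qs bbar x <= 0.
Proof.
  assert (Hin : In (eff_gradient d par lam mu mu0 (fun _ => true)) qs) by (apply Hqs; eauto).
  destruct (In_nth _ _ nil Hin) as [l [Hl Hql]].
  assert (HWl : W_l d par lam mu mu0 beta eps qs bbar l x < 0).
  { pose proof (inner_all_busy_on_S2 d par lam mu mu0 beta x Hrho Hx) as Hinner.
    pose proof (alpha_ge_1 d (nth l bbar (fun _ => true))).
    unfold W_l. rewrite Hql. nra. }
  assert (Hsoft : W_soft d par lam mu mu0 beta eps delta qs bbar x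
                    <= W_l d par lam mu mu0 beta eps qs bbar l x).
  { apply (softmin_le_term (seq 0 (length qs))
            (fun k => W_l d par lam mu mu0 beta eps qs bbar k x)); [exact Hdelta|].
    apply in_seq; lia. }
  lra.
Qed.
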